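(* Let $n, m \geq 0$ be integers of the same parity. Then $a(n) <_4 a(m)$ if and only if $t(m) < t(n)$, and $a(n) \leq_4 a(m)$ if and only if $t(m) \leq t(n)$.
   Context: The Thue–Morse sequence $(t(n))_{n\geq 0}$ is defined by $t(0)=0$, $t(2n)=t(n)$, $t(2n+1)=1-t(n)$. $(a(n))_{n\geq0}$ is the increasing sequence (indexed from $0$, $a(0)=1$) of odious numbers, i.e. nonnegative integers whose sum of binary digits is odd. For integers $x, y$, let $\bar x, \bar y \in \{0,1,2,3\}$ be their residues modulo $4$; write $x <_4 y$ if $\bar x < \bar y$ and $x \leq_4 y$ if $\bar x \leq \bar y$ (and $x >_4 y$, $x \geq_4 y$ mean $y <_4 x$, $y \leq_4 x$). *)

From mathcomp Require Import all_boot.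
Set Implicit Arguments. Unset Strict Implicit. Unset Printing Implicit Defensive.

Fixpoint bsum_aux (fuel n : nat) : nat :=
  match fuel with
  | 0 => 0
  | f.+1 => if n is 0 then 0 else odd n + bsum_aux f n./2
  end.
Definition bsum (n : nat) : nat := bsum_aux n n.

Fixpoint t_aux (fuel n : nat) : nat :=
  match fuel with
  | 0 => 0
  | f.+1 => if n is 0 then 0
            else if odd n then 1 - t_aux f n./2 else t_aux f n./2
  end.
Definition t (n : nat) : nat := t_aux n n.

Definition odious (n : nat) : bool := odd (bsum n).

(* a n = the n-th (0-indexed) odious number, in increasing order.
   Each block {2j, 2j+1} contains exactly one odious number, so
   [0, 4n+4) contains at least n+1 of them. *)
Definition a (n : nat) : nat := nth 0 [seq k <- iota 0 (4 * n + 4) | odious k] n.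

Definition lt4 (x y : nat) : bool := x %% 4 < y %% 4.
Definition le4 (x y : nat) : bool := x %% 4 <= y %% 4.

Example t_check : [seq t i | i <- iota 0 8] = [:: 0;1;1;0;1;0;0;1]. Proof. by []. Qed.
Example a_check : [seq a i | i <- iota 0 8] = [:: 1;2;4;7;8;11;13;14]. Proof. by []. Qed.

(* Each pair {2j, 2j+1} contains exactly one odious number, namely
   2j + 1 - t(j), since t is the parity of the binary digit sum and
   t(2j) = t(j), t(2j+1) = 1 - t(j).  Hence a(n) = 2n + 1 - t(n), so
   a(n) = 2 (n mod 2) + 1 - t(n) modulo 4: for n and m of the same parity
   the residues of a(n) and a(m) differ only through -t(n) and -t(m). *)

From mathcomp Require Import all_boot.
From mathcomp Require Import zify.

Lemma halfS_leq n : n.+1./2 <= n.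
Proof. by rewrite leq_half_double -addnn leq_addr. Qed.

Lemma t_aux_fuel f g n : n <= f -> n <= g -> t_aux f n = t_aux g n.
Proof.
elim: f g n => [|f IH] [|g] [|n] //= le_nf le_ng.
by rewrite (IH g) // (leq_trans (halfS_leq n)).
Qed.

Lemma bsum_aux_fuel f g n : n <= f -> n <= g -> bsum_aux f n = bsum_aux g n.
Proof.
elim: f g n => [|f IH] [|g] [|n] //= le_nf le_ng.
by rewrite (IH g) // (leq_trans (halfS_leq n)).
Qed.

Lemma t_rec n : 0 < n -> t n = if odd n then 1 - t n./2 else t n./2.
Proof.
case: n => // n _; rewrite /t /=.
by rewrite (t_aux_fuel n (n.+1./2) (n.+1./2)) // halfS_leq.
Qed.

Lemma bsum_rec n : 0 < n -> bsum n = odd n + bsum n./2.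
Proof.
case: n => // n _; rewrite /bsum /=.
by rewrite (bsum_aux_fuel n (n.+1./2) (n.+1./2)) // halfS_leq.
Qed.

Lemma t_odd_bsum n : t n = odd (bsum n).
Proof.
elim: n {-2}n (leqnn n) => [|N IH] [|n] //= le_nN.
rewrite t_rec // bsum_rec // oddD IH; last exact: leq_trans (halfS_leq n) _.
by case: (odd n.+1) => //=; case: (odd _).
Qed.

Lemma t_le1 n : t n <= 1.
Proof. by rewrite t_odd_bsum; case: (odd _). Qed.

Lemma t_double k : t k.*2 = t k.
Proof. by case: k => // k; rewrite t_rec ?odd_double ?doubleK. Qed.

Lemma t_doubleS k : t k.*2.+1 = 1 - t k.
Proof. by rewrite t_rec //= odd_double /= uphalf_double. Qed.

Lemma odiousE k : odious k = (t k == 1).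
Proof. by rewrite /odious t_odd_bsum; case: (odd _). Qed.

Lemma odious_iota_double N :
  [seq k <- iota 0 N.*2 | odious k] = [seq j.*2 + 1 - t j | j <- iota 0 N].
Proof.
elim: N => // N IH.
rewrite -addn1 doubleD iotaD filter_cat IH iotaD map_cat /= add0n.
congr (_ ++ _).
rewrite !odiousE t_doubleS t_double add0n addn1.
by have := t_le1 N; case: (t N) => [|[|]] // _; rewrite ?subn0 ?subn1.
Qed.

Lemma aE n : a n = n.*2 + 1 - t n.
Proof.
rewrite /a (_ : 4 * n + 4 = n.+1.*2.*2); last by rewrite -!muln2; lia.
rewrite odious_iota_double (nth_map 0) ?nth_iota ?size_iota //; lia.
Qed.

Lemma a_mod4 n : a n %% 4 = (odd n).*2 + 1 - t n.
Proof.
rewrite aE; have := t_le1 n; have := odd_double_half n.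
move: (t n) (odd n) (n./2) => tn [] h <- le_tn1 /=; lia.
Qed.

Theorem lemma2 (n m : nat) (Hpar : odd n = odd m) :
  (lt4 (a n) (a m) <-> t m < t n) /\ (le4 (a n) (a m) <-> t m <= t n).
Proof.
rewrite /lt4 /le4 !a_mod4 Hpar.
have := t_le1 n; have := t_le1 m.
by case: (odd m) (t n) (t m) => [] [|[|?]] [|[|?]].
Qed.
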